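(* Let $\mathcal{F}$ be a Hilbert space and $N\ge1$. Let $\Omega_1(t),\dots,\Omega_N(t)$ be invertible, differentiable operators on $\mathcal{F}$. Set $\widetilde{\Sigma}_j(t)={\rm i}\,\Omega_j^{-1}(t)\dot\Omega_j(t)$, $\Sigma_{N+1}(t)=0$ and $\Sigma_j(t)=\widetilde\Sigma_j(t)+\Omega_j^{-1}(t)\Sigma_{j+1}(t)\Omega_j(t)$ for $j=N,\dots,1$. Let $\mathfrak a$ be a time-independent operator on $\mathcal F$, put $A_N(t)=\mathfrak a$, and define recursively $A_{j-1}(t)=\Omega_j^{-1}(t)A_j(t)\Omega_j(t)$ (i.e. $\Omega_j(t)A_{j-1}(t)=A_j(t)\Omega_j(t)$) for $j=N,\dots,1$. Then for every $k=1,\dots,N$, $${\rm i}\frac{d}{dt}A_{N-k}(t)=A_{N-k}(t)\,\Sigma_{N-k+1}(t)-\Sigma_{N-k+1}(t)\,A_{N-k}(t).$$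
   Context: $\dot\Omega_j(t)=\frac{d}{dt}\Omega_j(t)$. The $\Sigma_j$ are the composite quantum Coriolis forces; $A_j(t)$ represents an observable (self-adjoint, time-independent $\mathfrak a$ in the conventional picture $j=N$) in the $j$-th representation. *)

From HB Require Import structures.
From mathcomp Require Import all_boot all_order all_algebra.
From mathcomp Require Import all_classical all_reals all_analysis.
From mathcomp Require Export complex.
Set Implicit Arguments. Unset Strict Implicit. Unset Printing Implicit Defensive.
Import Order.TTheory GRing.Theory Num.Theory.
Import numFieldNormedType.Exports.
Local Open Scope ring_scope.
Local Open Scope complex_scope.

Definition hilbert_ip (R : realType) (H : completeNormedModType R[i])
    (ip : H -> H -> R[i]) : Prop :=
  [/\ forall a (u v w : H), ip (a *: u + v) w = a * ip u w + ip v w,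
      forall u v : H, ip v u = (ip u v)^*,
      forall v : H, 0 <= ip v v &
      forall v : H, `|v| ^+ 2 = ip v v].

Definition bounded_op (R : realType) (H : normedModType R[i]) (X : H -> H) : Prop :=
  (forall (a : R[i]) (u v : H), X (a *: u + v) = a *: X u + X v) /\
  exists M : R, forall v : H, `|X v| <= M%:C * `|v|.

(* X' t is the derivative at t of the operator-valued function X, in the
   operator-norm (uniform) topology: for every e > 0 there is d > 0 with
   || X(t+h) - X(t) - h X'(t) ||_op <= e |h|  whenever |h| < d. *)
Definition op_deriv (R : realType) (H : normedModType R[i])
    (X X' : R -> H -> H) (t : R) : Prop :=
  forall e : R, 0 < e -> exists2 d : R, 0 < d &
    forall h : R, `|h| < d -> forall v : H,
      `|X (t + h) v - X t v - h%:C *: X' t v| <= (e * `|h|)%:C * `|v|.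

Definition opcomp (T : Type) (X Y : T -> T) : T -> T := fun v => X (Y v).
Definition opsub (R : realType) (H : normedModType R[i]) (X Y : H -> H) : H -> H :=
  fun v => X v - Y v.
Definition opadd (R : realType) (H : normedModType R[i]) (X Y : H -> H) : H -> H :=
  fun v => X v + Y v.
Definition opscale (R : realType) (H : normedModType R[i]) (a : R[i]) (X : H -> H)
  : H -> H := fun v => a *: X v.

(* Sigma_aux m t = Sigma_{N+1-m}(t):
   Sigma_{N+1} = 0,
   Sigma_j = i Om_j^{-1} dOm_j + Om_j^{-1} Sigma_{j+1} Om_j. *)
Fixpoint Sigma_aux (R : realType) (H : normedModType R[i]) (N : nat)
    (Om Omi Omd : nat -> R -> H -> H) (m : nat) (t : R) : H -> H :=
  match m with
  | 0 => fun _ => 0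
  | m'.+1 =>
      let j := (N - m')%N in
      opadd (opscale 'i (opcomp (Omi j t) (Omd j t)))
            (opcomp (Omi j t) (opcomp (Sigma_aux N Om Omi Omd m' t) (Om j t)))
  end.

(* Sigma j t = Sigma_j(t), for 1 <= j <= N+1 *)
Definition Sigma (R : realType) (H : normedModType R[i]) (N : nat)
    (Om Omi Omd : nat -> R -> H -> H) (j : nat) (t : R) : H -> H :=
  Sigma_aux N Om Omi Omd (N.+1 - j) t.

(* A_aux m t = A_{N-m}(t): A_N = a, A_{j-1} = Om_j^{-1} A_j Om_j. *)
Fixpoint A_aux (R : realType) (H : normedModType R[i]) (N : nat)
    (Om Omi : nat -> R -> H -> H) (a : H -> H) (m : nat) (t : R) : H -> H :=
  match m with
  | 0 => a
  | m'.+1 => let j := (N - m')%N in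
             opcomp (Omi j t) (opcomp (A_aux N Om Omi a m' t) (Om j t))
  end.

(* Aop j t = A_j(t), for 0 <= j <= N *)
Definition Aop (R : realType) (H : normedModType R[i]) (N : nat)
    (Om Omi : nat -> R -> H -> H) (a : H -> H) (j : nat) (t : R) : H -> H :=
  A_aux N Om Omi a (N - j) t.

From HB Require Import structures.
From mathcomp Require Import all_boot all_order all_algebra.
From mathcomp Require Import all_classical all_reals all_analysis.
From mathcomp Require Import complex.
From mathcomp Require Import ring lra.
Import Order.TTheory GRing.Theory Num.Theory.
Import numFieldNormedType.Exports.
Local Open Scope ring_scope.
Local Open Scope complex_scope.
Set Implicit Arguments. Unset Strict Implicit. Unset Printing Implicit Defensive.

(* A_{j-1} = Ω_j^{-1} A_j Ω_j, so the product rule and (Ω^{-1})' = -Ω^{-1} Ω' Ω^{-1} turn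
   i A_j' = [A_j, Σ_{j+1}] into i A_{j-1}' = [A_{j-1}, i Ω_j^{-1} Ω_j' + Ω_j^{-1} Σ_{j+1} Ω_j]
   = [A_{j-1}, Σ_j]; the induction starts from the constant A_N = 𝔞, where Σ_{N+1} = 0.
   Derivatives are taken in operator norm, so these calculus rules rest on uniform bounds
   ‖E(h)‖ ≤ e|h| near h = 0. *)

Section OperatorBounds.
Variables (R : realType) (H : normedModType R[i]).
Implicit Types (X Y : H -> H) (u v : H) (M K : R).

(* The norm of a normed R[i]-module is R[i]-valued (a nonnegative real); rnorm reads it in R. *)
Definition rnorm v : R := complex.Re `|v|.

Lemma rnormE v : `|v| = (rnorm v)%:C.
Proof.
by rewrite /rnorm; have := normr_ge0 v; case: `|v| => a b; rewrite lecE /= => /andP[/eqP -> _].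
Qed.

Lemma rnorm_ge0 v : 0 <= rnorm v.
Proof. by rewrite -ler0c -rnormE. Qed.

Lemma rnormD u v : rnorm (u + v) <= rnorm u + rnorm v.
Proof. by rewrite -lecR rmorphD /= -!rnormE ler_normD. Qed.

Lemma rnormN v : rnorm (- v) = rnorm v.
Proof. by rewrite /rnorm normrN. Qed.

Lemma rnormZ (h : R) v : rnorm (h%:C *: v) = `|h| * rnorm v.
Proof.
apply: complexI; rewrite rmorphM /= -!rnormE normrZ.
by rewrite normc_def /= expr0n /= addr0 sqrtr_sqr.
Qed.

Definition op_le X M := forall v, rnorm (X v) <= M * rnorm v.

Lemma op_leP X M : op_le X M <-> forall v, `|X v| <= M%:C * `|v|.
Proof. by split=> XM v; move: (XM v); rewrite !rnormE -rmorphM lecR. Qed.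

Lemma eq_op_le X Y M : (forall v, X v = Y v) -> op_le Y M -> op_le X M.
Proof. by move=> XY YM v; rewrite XY. Qed.

Lemma op_le_trans X M K : M <= K -> op_le X M -> op_le X K.
Proof. by move=> MK XM v; apply: le_trans (XM v) _; rewrite ler_wpM2r ?rnorm_ge0. Qed.

Lemma op_le_comp X Y M K :
  0 <= M -> op_le X M -> op_le Y K -> op_le (fun v => X (Y v)) (M * K).
Proof. by move=> M0 XM YK v; apply: le_trans (XM _) _; rewrite -mulrA ler_wpM2l. Qed.

Lemma op_leD X Y M K : op_le X M -> op_le Y K -> op_le (fun v => X v + Y v) (M + K).
Proof. by move=> XM YK v; apply: le_trans (rnormD _ _) _; rewrite mulrDl lerD. Qed.

Lemma op_leN X M : op_le X M -> op_le (fun v => - X v) M.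
Proof. by move=> XM v; rewrite rnormN. Qed.

Lemma op_leZ X M (h : R) : op_le X M -> op_le (fun v => h%:C *: X v) (`|h| * M).
Proof. by move=> XM v; rewrite rnormZ -mulrA ler_wpM2l. Qed.

Lemma bounded_opE X : bounded_op X <-> linear X /\ exists M, op_le X M.
Proof. by split=> -[LX [M XM]]; split=> //; exists M; apply/op_leP. Qed.

Lemma bounded_op_le X : bounded_op X -> exists2 M, 0 <= M & op_le X M.
Proof.
case/bounded_opE=> _ [M XM]; exists (Num.max M 0); first by rewrite le_max lexx orbT.
by apply: op_le_trans XM; rewrite le_max lexx.
Qed.

Lemma linB X : linear X -> forall u v, X (u - v) = X u - X v.
Proof. by move=> LX; exact: (linearB (HB.pack X (GRing.isLinear.Build _ _ _ _ X LX))). Qed.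

Lemma linD X : linear X -> forall u v, X (u + v) = X u + X v.
Proof. by move=> LX; exact: (linearD (HB.pack X (GRing.isLinear.Build _ _ _ _ X LX))). Qed.

Lemma linZ X : linear X -> forall (a : R[i]) v, X (a *: v) = a *: X v.
Proof. by move=> LX; exact: (linearZZ (HB.pack X (GRing.isLinear.Build _ _ _ _ X LX))). Qed.

Lemma bounded_op0 : bounded_op (fun _ : H => 0).
Proof.
apply/bounded_opE; split; first by move=> a u v; rewrite scaler0 addr0.
by exists 0 => v; rewrite /rnorm normr0 mul0r.
Qed.

Lemma bounded_op_comp X Y : bounded_op X -> bounded_op Y -> bounded_op (fun v => X (Y v)).
Proof.
move=> BX BY; have [M M0 XM] := bounded_op_le BX; have [K _ YK] := bounded_op_le BY.
case/bounded_opE: BX BY => LX _ /bounded_opE[LY _]; apply/bounded_opE; split.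
  by move=> a u v; rewrite LY LX.
by exists (M * K); apply: op_le_comp.
Qed.

Lemma bounded_opD X Y : bounded_op X -> bounded_op Y -> bounded_op (fun v => X v + Y v).
Proof.
case/bounded_opE=> LX [M XM] /bounded_opE[LY [K YK]]; apply/bounded_opE; split.
  by move=> a u v; rewrite LX LY scalerDr addrACA.
by exists (M + K); apply: op_leD.
Qed.

Lemma bounded_opN X : bounded_op X -> bounded_op (fun v => - X v).
Proof.
case/bounded_opE=> LX [M XM]; apply/bounded_opE; split.
  by move=> a u v; rewrite LX opprD scalerN.
by exists M; apply: op_leN.
Qed.

End OperatorBounds.

Section SmallOperatorFamilies.
Variables (R : realType) (H : normedModType R[i]).
Implicit Types (X : H -> H) (A E W : R -> H -> H).

Definition op_littleo E :=
  forall e : R, 0 < e -> \forall h \near 0, op_le (E h) (e * `|h|).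
Definition op_bigO E :=
  exists2 C : R, 0 <= C & \forall h \near 0, op_le (E h) (C * `|h|).
Definition op_locbnd A :=
  exists2 K : R, 0 <= K & \forall h \near 0, op_le (A h) K.

Let mul_div_addr1_le (K e : R) : 0 <= K -> 0 < e -> K * (e / (K + 1)) <= e.
Proof. by move=> K0 e0; rewrite mulrA ler_pdivrMr ?ltr_wpDl //; nra. Qed.

Lemma eq_op_littleo E W : (forall h v, E h v = W h v) -> op_littleo W -> op_littleo E.
Proof. by move=> EW oW e /oW; apply: filterS => h Wh v; rewrite EW. Qed.

Lemma op_littleoD E W : op_littleo E -> op_littleo W -> op_littleo (fun h v => E h v + W h v).
Proof.
move=> oE oW e e0; have e2 : 0 < e / 2 by rewrite divr_gt0.
near=> h; rewrite [e * _](_ : _ = e / 2 * `|h| + e / 2 * `|h|); last by field.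
by apply: op_leD; near: h; [exact: oE | exact: oW].
Unshelve. all: by end_near. Qed.

Lemma op_littleoN E : op_littleo E -> op_littleo (fun h v => - E h v).
Proof. by move=> oE e /oE; apply: filterS => h; apply: op_leN. Qed.

Lemma op_littleo_compl A E :
  op_locbnd A -> op_littleo E -> op_littleo (fun h v => A h (E h v)).
Proof.
move=> [K K0 AK] oE e e0; have eK : 0 < e / (K + 1) by rewrite divr_gt0 // ltr_wpDl.
near=> h; apply: (@op_le_trans _ _ _ (K * (e / (K + 1) * `|h|))).
  by rewrite mulrA ler_wpM2r // mul_div_addr1_le.
by apply: op_le_comp => //; near: h; [exact: AK | exact: oE].
Unshelve. all: by end_near. Qed.

Lemma op_littleo_compr E A :
  op_littleo E -> op_locbnd A -> op_littleo (fun h v => E h (A h v)).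
Proof.
move=> oE [K K0 AK] e e0; have eK : 0 < e / (K + 1) by rewrite divr_gt0 // ltr_wpDl.
near=> h; apply: (@op_le_trans _ _ _ (e / (K + 1) * `|h| * K)).
  by rewrite mulrAC ler_wpM2r // mulrC mul_div_addr1_le.
apply: op_le_comp; [by rewrite mulr_ge0 // ltW | near: h; exact: oE | near: h; exact: AK].
Unshelve. all: by end_near. Qed.

Lemma op_littleo_scale W : op_bigO W -> op_littleo (fun h v => h%:C *: W h v).
Proof.
move=> [C C0 WC] e e0; have eC : 0 < e / (C + 1) by rewrite divr_gt0 // ltr_wpDl.
near=> h; apply: (@op_le_trans _ _ _ (`|h| * (C * `|h|))).
  have : `|h| < e / (C + 1) by near: h; exact: (@nbhs0_lt _ R).
  rewrite ltr_pdivlMr ?ltr_wpDl // => hC.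
  by have := normr_ge0 h; nra.
by apply: op_leZ; near: h; exact: WC.
Unshelve. all: by end_near. Qed.

Lemma op_locbnd_cst X : bounded_op X -> op_locbnd (fun _ => X).
Proof. by case/bounded_op_le=> M M0 XM; exists M => //; near=> h. Unshelve. all: by end_near. Qed.

End SmallOperatorFamilies.

Section OperatorDerivatives.
Variables (R : realType) (H : normedModType R[i]).
Implicit Types (F dF G dG : R -> H -> H) (t : R).

Lemma op_derivE F dF t :
  op_deriv F dF t <-> op_littleo (fun h v => F (t + h) v - F t v - h%:C *: dF t v).
Proof.
split=> D e /D.
  by case=> d d0 Dd; apply/nbhs_norm0P; exists d => // h /Dd /op_leP.
by case/nbhs_norm0P=> d d0 Dd; exists d => // h /Dd /op_leP.
Qed.

Lemma op_deriv_cst (X : H -> H) t : op_deriv (fun _ => X) (fun _ _ => 0) t.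
Proof.
move=> e e0; exists 1 => // h _ v.
by rewrite scaler0 subrr subr0 normr0 mulr_ge0 // ler0c mulr_ge0 // ltW.
Qed.

Lemma op_deriv_bigO F dF t :
  op_deriv F dF t -> bounded_op (dF t) -> op_bigO (fun h v => F (t + h) v - F t v).
Proof.
move=> /op_derivE oF /bounded_op_le[M M0 dFM]; exists (1 + M); first by rewrite addr_ge0.
near=> h; apply: (@eq_op_le _ _ _
  (fun v => (F (t + h) v - F t v - h%:C *: dF t v) + h%:C *: dF t v)).
  by move=> v; rewrite subrK.
rewrite mulrDl [M * _]mulrC; apply: op_leD; last exact: op_leZ.
by near: h; exact: oF.
Unshelve. all: by end_near. Qed.

Lemma op_deriv_locbnd F dF t : op_deriv F dF t -> bounded_op (F t) -> bounded_op (dF t) ->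
  op_locbnd (fun h => F (t + h)).
Proof.
move=> DF BF BdF; have [C C0 FC] := op_deriv_bigO DF BdF.
have [M M0 FM] := bounded_op_le BF; exists (C + M); first by rewrite addr_ge0.
near=> h; apply: (@eq_op_le _ _ _ (fun v => (F (t + h) v - F t v) + F t v)).
  by move=> v; rewrite subrK.
apply: op_leD => //; apply: (@op_le_trans _ _ _ (C * `|h|)).
  by rewrite ler_piMr // ltW //; near: h; exact: (@nbhs0_lt _ R).
by near: h; exact: FC.
Unshelve. all: by end_near. Qed.

Lemma op_deriv_comp F dF G dG t :
  op_deriv F dF t -> op_deriv G dG t ->
  bounded_op (F t) -> bounded_op (dF t) -> bounded_op (G t) -> bounded_op (dG t) ->
  op_deriv (fun s => opcomp (F s) (G s)) (fun s v => dF s (G s v) + F s (dG s v)) t.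
Proof.
move=> DF DG BF BdF BG BdG; have [LF LdF] := (proj1 BF, proj1 BdF).
apply/op_derivE; apply: (@eq_op_littleo _ _ _ (fun h v =>
    (F (t + h) (G (t + h) v) - F t (G (t + h) v) - h%:C *: dF t (G (t + h) v))
    + F t (G (t + h) v - G t v - h%:C *: dG t v)
    + dF t (h%:C *: (G (t + h) v - G t v)))).
  move=> h v; rewrite /opcomp !(linB LF) (linZ LF) (linZ LdF) (linB LdF) !scalerBr scalerDr.
  set a := F (t + h) _; set b := F t (G (t + h) v); set c := F t (G t v).
  set p := h%:C *: dF t (G (t + h) v); set q := h%:C *: F t _.
  set r := h%:C *: dF t (G t v).
  rewrite [RHS]addrAC -[a - b - p + _]addrA addKr [a - b - r]addrAC -[b - c - q]addrA -addrA addKr.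
  by rewrite opprD !addrA [a - c - r]addrAC.
apply: op_littleoD; first apply: op_littleoD.
- exact/(op_littleo_compr (proj1 (op_derivE _ _ _) DF))/(op_deriv_locbnd DG).
- exact/(op_littleo_compl (op_locbnd_cst BF))/op_derivE.
- exact/(op_littleo_compl (op_locbnd_cst BdF))/op_littleo_scale/(op_deriv_bigO DG).
Qed.

Lemma op_locbnd_inv (Om Omi : R -> H -> H) t :
  (forall s, cancel (Omi s) (Om s)) -> cancel (Om t) (Omi t) -> bounded_op (Omi t) ->
  op_bigO (fun h v => Om (t + h) v - Om t v) -> op_locbnd (fun h => Omi (t + h)).
Proof.
move=> OmK OmiK BOmi [C C0 OmC]; have [M M0 OmiM] := bounded_op_le BOmi.
have MC1 : 0 < 1 / (2 * (M * C + 1)) by rewrite divr_gt0 // mulr_gt0 // ltr_wpDl ?mulr_ge0.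
exists (2 * M); first by rewrite mulr_ge0.
(* For w = Omi (t + h) v, |w| <= M (|v| + C |h| |w|), and M C |h| <= 1/2 absorbs the last term. *)
near=> h; have small : M * (C * `|h|) <= 1 / 2.
  have : `|h| < 1 / (2 * (M * C + 1)) by near: h; exact: (@nbhs0_lt _ R).
  rewrite ltr_pdivlMr ?mulr_gt0 ?ltr_wpDl ?mulr_ge0 //.
  by have := normr_ge0 h; have := mulr_ge0 M0 C0; nra.
have OmCh : op_le (fun v => Om (t + h) v - Om t v) (C * `|h|) by near: h; exact: OmC.
move=> v; set w := Omi (t + h) v.
have wM : rnorm w <= M * rnorm (Om t w) by rewrite -{1}[w]OmiK.
have Omw : rnorm (Om t w) <= rnorm v + C * `|h| * rnorm w.
  rewrite -[Om t w](subKr v) -{2}(OmK (t + h) v) -/w.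
  by apply: le_trans (rnormD _ _) _; rewrite rnormN lerD2l; exact: OmCh.
have := ler_wpM2l M0 Omw; have := rnorm_ge0 w; have := rnorm_ge0 v; nra.
Unshelve. all: by end_near. Qed.

Lemma op_deriv_inv (Om Omi dOm : R -> H -> H) t :
  (forall s, bounded_op (Omi s)) ->
  (forall s, cancel (Omi s) (Om s)) -> (forall s, cancel (Om s) (Omi s)) ->
  op_deriv Om dOm t -> bounded_op (dOm t) ->
  op_deriv Omi (fun s v => - Omi s (dOm s (Omi s v))) t.
Proof.
move=> BOmi OmK OmiK DOm BdOm; have LOmi s := proj1 (BOmi s).
have OmO := op_deriv_bigO DOm BdOm.
have Omi_loc := op_locbnd_inv OmK (OmiK t) (BOmi t) OmO.
apply/op_derivE; apply: (@eq_op_littleo _ _ _ (fun h v =>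
    - Omi (t + h) (Om (t + h) (Omi t v) - Om t (Omi t v) - h%:C *: dOm t (Omi t v))
    + Omi (t + h) (h%:C *: (Om (t + h) (Omi t (dOm t (Omi t v)))
                            - Om t (Omi t (dOm t (Omi t v))))))).
  move=> h v; rewrite (linZ (LOmi _)) !(linB (LOmi _)) (linZ (LOmi _)) !OmiK !OmK.
  rewrite scalerBr scalerN.
  by rewrite opprK !opprB [RHS]addrC addrA subrK addrC.
apply: op_littleoD; first apply: op_littleoN.
- apply/(op_littleo_compl Omi_loc)/(op_littleo_compr (proj1 (op_derivE _ _ _) DOm)).
  exact: op_locbnd_cst.
- apply/(op_littleo_compl Omi_loc)/(op_littleo_compr (op_littleo_scale OmO)).
  exact/op_locbnd_cst/bounded_op_comp/bounded_op_comp.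
Qed.

End OperatorDerivatives.

Section Conjugation.
Variables (R : realType) (H : normedModType R[i]).
Implicit Types (F dF G dG : R -> H -> H).

Definition bounded_deriv F dF :=
  forall t, [/\ bounded_op (F t), bounded_op (dF t) & op_deriv F dF t].

Definition heisenberg F dF Sig :=
  forall t v, 'i *: dF t v = F t (Sig t v) - Sig t (F t v).

Lemma bounded_deriv_cst (X : H -> H) : bounded_op X -> bounded_deriv (fun _ => X) (fun _ _ => 0).
Proof. by move=> BX t; split; [| exact: bounded_op0 | exact: op_deriv_cst]. Qed.

Lemma bounded_deriv_comp F dF G dG : bounded_deriv F dF -> bounded_deriv G dG ->
  bounded_deriv (fun s => opcomp (F s) (G s)) (fun s v => dF s (G s v) + F s (dG s v)).
Proof.
move=> DF DG t; have [BF BdF DFt] := DF t; have [BG BdG DGt] := DG t; split.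
- exact: bounded_op_comp.
- by apply: bounded_opD; apply: bounded_op_comp.
- exact: op_deriv_comp.
Qed.

Variables Om Omi dOm : R -> H -> H.
Hypotheses (BOmi : forall s, bounded_op (Omi s)) (OmK : forall s, cancel (Omi s) (Om s))
  (OmiK : forall s, cancel (Om s) (Omi s)) (DOm : bounded_deriv Om dOm).

Lemma bounded_deriv_inv : bounded_deriv Omi (fun s v => - Omi s (dOm s (Omi s v))).
Proof.
move=> t; have [_ BdOm DOmt] := DOm t; split => //.
- exact/bounded_opN/bounded_op_comp/bounded_op_comp.
- exact: op_deriv_inv.
Qed.

Lemma bounded_deriv_conj X dX : bounded_deriv X dX ->
  bounded_deriv (fun s => opcomp (Omi s) (opcomp (X s) (Om s)))
    (fun s v => - Omi s (dOm s (Omi s (X s (Om s v))))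
                + Omi s (dX s (Om s v) + X s (dOm s v))).
Proof. by move=> DX; apply: bounded_deriv_comp bounded_deriv_inv (bounded_deriv_comp DX DOm). Qed.

Lemma heisenberg_conj X dX Sig : (forall s, linear (X s)) -> heisenberg X dX Sig ->
  heisenberg (fun s => opcomp (Omi s) (opcomp (X s) (Om s)))
    (fun s v => - Omi s (dOm s (Omi s (X s (Om s v))))
                + Omi s (dX s (Om s v) + X s (dOm s v)))
    (fun s => opadd (opscale 'i (opcomp (Omi s) (dOm s)))
                    (opcomp (Omi s) (opcomp (Sig s) (Om s)))).
Proof.
move=> LX HX t v; rewrite /opadd /opscale /opcomp.
have [[LOm _] _ _] := DOm t; have LOmi := proj1 (BOmi t).
have E1 : 'i *: Omi t (dX t (Om t v)) =
    Omi t (X t (Sig t (Om t v))) - Omi t (Sig t (X t (Om t v))).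
  by rewrite -(linZ LOmi) HX (linB LOmi).
have E2 : Om t ('i *: Omi t (dOm t v) + Omi t (Sig t (Om t v))) =
    'i *: dOm t v + Sig t (Om t v).
  by rewrite (linD LOm) (linZ LOm) !OmK.
rewrite (linD LOmi) scalerDr scalerN scalerDr E1 E2.
rewrite (linD (LX t)) (linZ (LX t)) (linD LOmi) (linZ LOmi) OmK.
set x := 'i *: Omi t (dOm t _); set y := Omi t (X t _); set z := Omi t (Sig t _).
set w := 'i *: Omi t (X t _).
by rewrite opprD addrACA [y - z + w]addrC [- x + (w + _)]addrA [- x + w]addrC.
Qed.

End Conjugation.

Section MovingFrames.
Variables (R : realType) (H : normedModType R[i]) (N : nat).
Variables (Om Omi Omd : nat -> R -> H -> H) (a : H -> H).
Hypothesis frame_inv : forall j t, (1 <= j <= N)%N ->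
  [/\ bounded_op (Om j t), bounded_op (Omi j t), bounded_op (Omd j t),
      (forall v, Om j t (Omi j t v) = v) & (forall v, Omi j t (Om j t v) = v)].
Hypothesis frame_deriv : forall j t, (1 <= j <= N)%N -> op_deriv (Om j) (Omd j) t.
Hypothesis Ba : bounded_op a.

Lemma A_aux_heisenberg m : (m <= N)%N ->
  exists2 dA, bounded_deriv (A_aux N Om Omi a m) dA
            & heisenberg (A_aux N Om Omi a m) dA (Sigma_aux N Om Omi Omd m).
Proof.
elim: m => [_ | m IH mN].
  exists (fun _ _ => 0); first exact: bounded_deriv_cst.
  move=> t v /=; rewrite scaler0 subr0.
  by have := linB (proj1 Ba) 0 0; rewrite !subrr.
have [dA DA HA] := IH (ltnW mN).
have jN : (1 <= N - m <= N)%N by rewrite subn_gt0 mN leq_subr.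
have BOmi s : bounded_op (Omi (N - m) s) by case: (frame_inv s jN).
have OmK s : cancel (Omi (N - m) s) (Om (N - m) s) by case: (frame_inv s jN).
have OmiK s : cancel (Om (N - m) s) (Omi (N - m) s) by case: (frame_inv s jN).
have DOm : bounded_deriv (Om (N - m)) (Omd (N - m)).
  by move=> t; case: (frame_inv t jN) => BOm _ BOmd _ _; split; last exact: frame_deriv.
eexists; first exact: (bounded_deriv_conj BOmi OmK OmiK DOm DA).
by apply: heisenberg_conj => // s; case: (DA s) => /proj1.
Qed.

End MovingFrames.

Theorem theorem3 (R : realType) (H : completeNormedModType R[i])
    (ip : H -> H -> R[i]) (N : nat)
    (Om Omi Omd : nat -> R -> H -> H) (a : H -> H) :
  hilbert_ip ip ->
  (1 <= N)%N ->
  (forall j t, (1 <= j <= N)%N ->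
     [/\ bounded_op (Om j t), bounded_op (Omi j t), bounded_op (Omd j t),
         (forall v, Om j t (Omi j t v) = v) &
         (forall v, Omi j t (Om j t v) = v)]) ->
  (forall j t, (1 <= j <= N)%N -> op_deriv (Om j) (Omd j) t) ->
  bounded_op a ->
  forall k : nat, (1 <= k <= N)%N ->
    exists dA : R -> H -> H,
      (forall t, op_deriv (Aop N Om Omi a (N - k)) dA t) /\
      (forall t v, 'i *: dA t v =
         Aop N Om Omi a (N - k) t (Sigma N Om Omi Omd (N - k).+1 t v)
         - Sigma N Om Omi Omd (N - k).+1 t (Aop N Om Omi a (N - k) t v)).
Proof.
move=> _ _ frame_inv frame_deriv Ba k /andP[_ kN].
have [dA DA HA] := A_aux_heisenberg frame_inv frame_deriv Ba kN.
exists dA; rewrite /Aop /Sigma subSS subKn //.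
by split=> [t | ]; [case: (DA t) | exact: HA].
Qed.
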